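(* Let $M$ be a manifold. Then $\mathsf{L}(M,\mathbb{R})$ holds.
   Context: All spaces are Hausdorff and maps continuous. A manifold is a connected Hausdorff space locally homeomorphic to $\mathbb{R}^n$. For a non-Lindelöf space $X$ and a space $Y$, $\mathsf{L}(X,Y)$ means: for every continuous $f:X\to Y$ there is a Lindelöf $Z\subset X$ with $f(Z)=f(X)$. (For Lindelöf $X$ the property is regarded as trivially true.) *)

From HB Require Import structures.
From mathcomp Require Import all_boot all_order all_algebra.
From mathcomp Require Import all_classical all_reals all_analysis.
Set Implicit Arguments. Unset Strict Implicit. Unset Printing Implicit Defensive.
Import Order.TTheory GRing.Theory Num.Theory.
Import numFieldNormedType.Exports.
Local Open Scope classical_set_scope.
Local Open Scope ring_scope.

(* Z is a Lindelöf subspace of T: every cover of Z by open subsets of T has a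
   countable subcover (equivalent to Z being Lindelöf in the subspace topology). *)
Definition lindelof_subset (T : topologicalType) (Z : set T) : Prop :=
  forall (I : Type) (U : I -> set T),
    (forall i, open (U i)) -> Z `<=` \bigcup_i U i ->
    exists J : set I, countable J /\ Z `<=` \bigcup_(i in J) U i.

Definition locally_euclidean (R : realType) (M : topologicalType) (n : nat) : Prop :=
  forall x : M, exists U : set M, open U /\ U x /\
    exists (f : M -> 'rV[R]_n) (g : 'rV[R]_n -> M),
      {within U, continuous f} /\ continuous g /\
      (forall y, U y -> g (f y) = y) /\
      (forall v, U (g v) /\ f (g v) = v).

Definition manifold (R : realType) (M : topologicalType) : Prop :=
  hausdorff_space M /\ connected [set: M] /\ exists n : nat, locally_euclidean R M n.

Definition prop_L (X Y : topologicalType) : Prop :=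
  forall f : X -> Y, continuous f ->
    exists Z : set X, lindelof_subset Z /\ f @` Z = f @` [set: X].

(* Call x and y joined when some connected Lindelöf set contains both. In a
   chart, the straight segment between two points is carried to a compact arc,
   so being joined is an equivalence relation whose classes are open; on a
   connected space it is therefore total. A continuous f : M -> R maps a set
   joining x and y onto an interval containing [f x, f y], and any set of reals
   is covered by countably many intervals with endpoints in it (endpoints beyond
   each rational, or extrema when attained), so countably many joining sets
   already exhaust f(M). *)

From mathcomp Require Import all_boot all_order all_algebra.
From mathcomp Require Import all_classical all_reals all_analysis.
From mathcomp Require Import finmap.
Import Order.TTheory GRing.Theory Num.Theory.
Import numFieldNormedType.Exports.

Set Implicit Arguments.
Unset Strict Implicit.
Unset Printing Implicit Defensive.
Local Open Scope classical_set_scope.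
Local Open Scope ring_scope.

Section lindelof_subset.
Variable T : topologicalType.

Lemma lindelof_bigcup (K : Type) (D : set K) (Z : K -> set T) :
  countable D -> (forall k, D k -> lindelof_subset (Z k)) ->
  lindelof_subset (\bigcup_(k in D) Z k).
Proof.
move=> Dc Zl I U Uo cover.
have /choice[J JP] : forall k, exists J : set I,
    D k -> countable J /\ Z k `<=` \bigcup_(i in J) U i.
  move=> k; have [Dk|nDk] := pselect (D k); last by exists set0.
  have [J ?] := Zl k Dk I U Uo (fun x Zkx => cover x (ex_intro2 _ _ k Dk Zkx)).
  by exists J.
exists (\bigcup_(k in D) J k); split.
  by apply: bigcup_countable => // k /JP[].
move=> x [k Dk /(proj2 (JP k Dk))[i Jki Uix]].
by exists i => //; exists k.
Qed.

Lemma lindelof_setU (A B : set T) :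
  lindelof_subset A -> lindelof_subset B -> lindelof_subset (A `|` B).
Proof.
move=> Al Bl; have -> : A `|` B = \bigcup_(b in [set: bool]) (if b then A else B).
  by apply/seteqP; split=> [x [Ax|Bx]|x [[] _ ?]];
    [exists true|exists false|left|right].
by apply: lindelof_bigcup => [|[]]; first exact: countableP.
Qed.

Lemma lindelof_image (U : topologicalType) (f : T -> U) (A : set T) :
  continuous f -> lindelof_subset A -> lindelof_subset (f @` A).
Proof.
move=> fC Al I V Vo cover.
have [J [Jc AJ]] := Al I (fun i => f @^-1` V i)
  (fun i => open_comp (fun x _ => fC x) (Vo i))
  (fun x Ax => cover _ (ex_intro2 _ _ x Ax erefl)).
exists J; split=> // _ [x /AJ[i Ji Vifx] <-].
by exists i.
Qed.

End lindelof_subset.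

Lemma compact_lindelof (T : ptopologicalType) (A : set T) :
  compact A -> lindelof_subset A.
Proof.
rewrite compact_cover => Acpt I U Uo cover.
have [J _ AJ] := Acpt {classic I} [set: {classic I}] U (fun i _ => Uo i) cover.
by exists [set` J]; split; first exact: (countable_fset J).
Qed.

Definition lindelof_joined {T : topologicalType} (x y : T) :=
  exists Z : set T, [/\ lindelof_subset Z, connected Z, Z x & Z y].

Section lindelof_joined.
Variable T : topologicalType.

Lemma lindelof_joined_sym (x y : T) : lindelof_joined x y -> lindelof_joined y x.
Proof. by case=> Z [Zl Zconn Zx Zy]; exists Z. Qed.

Lemma lindelof_joined_trans (x y z : T) :
  lindelof_joined x y -> lindelof_joined y z -> lindelof_joined x z.
Proof.
move=> [Z [Zl Zconn Zx Zy]] [W [Wl Wconn Wy Wz]].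
exists (Z `|` W); split; [exact: lindelof_setU | | by left | by right].
by apply: connectedU => //; exists y.
Qed.

Lemma path_lindelof_joined (R : realType) (h : R -> T) :
  continuous h -> lindelof_joined (h 0) (h 1).
Proof.
move=> hC; exists (h @` `[0, 1]); split.
- apply: lindelof_image => //; apply: compact_lindelof; exact: segment_compact.
- apply: connected_continuous_connected; last exact: continuous_subspaceT.
  exact: segment_connected.
- by exists 0 => //; rewrite /= in_itv /= lexx ler01.
- by exists 1 => //; rewrite /= in_itv /= lexx ler01.
Qed.

End lindelof_joined.

Lemma connected_locally_total (T : topologicalType) (E : T -> T -> Prop) :
  connected [set: T] -> (forall x y, E x y -> E y x) ->
  (forall x y z, E x y -> E y z -> E x z) ->
  (forall x, \forall y \near x, E x y) -> forall x y, E x y.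
Proof.
move=> Tconn Esym Etrans Enear x.
suff -> : E x = setT by [].
apply: Tconn; first by exists x; exact: nbhs_singleton (Enear x).
  exists (E x); last by rewrite setTI.
  rewrite openE => y Exy; apply: filterS (Enear y) => z.
  exact: Etrans.
exists (E x); last by rewrite setTI.
rewrite -[E x]setCK; apply: open_closedC.
rewrite openE => y nExy; apply: filterS (Enear y) => z Eyz Exz.
by apply: nExy; apply: Etrans Exz (Esym _ _ Eyz).
Qed.

Lemma locally_euclidean_joined (R : realType) (M : topologicalType) (n : nat) :
  locally_euclidean R M n -> forall x : M, \forall y \near x, lindelof_joined x y.
Proof.
move=> Meuc x; have [U [Uo [Ux [phi [psi [_ [psiC [phiK _]]]]]]]] := Meuc x.
apply: filterS (open_nbhs_nbhs (conj Uo Ux)) => y Uy.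
pose h t := psi (phi x + t *: (phi y - phi x)).
have hC : continuous h.
  move=> t; apply: continuous_comp; last exact: psiC.
  by apply: continuousD; [exact: cst_continuous | exact: continuousZl].
have := path_lindelof_joined hC.
by rewrite /h scale0r addr0 scale1r addrC subrK !phiK.
Qed.

Section countable_interval_cover.
Variable R : realType.

Lemma countable_cofinal_subset (A : set R) :
  exists2 B, countable B /\ B `<=` A & forall v, A v -> exists2 b, B b & v <= b.
Proof.
pose Q (i : option rat) : set R := if i is Some q
  then [set b | A b /\ ratr q <= b] else [set b | A b /\ forall w, A w -> w <= b].
have QA i : Q i `<=` A by case: i => [q|] b [].
exists [set xget 0 (Q i) | i in [set i | Q i !=set0]].
  split; first exact: sub_countable (card_image_le _ _) (countableP _).
  by move=> _ [i /xgetPex/QA Ab <-].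
move=> v Av; have [vmax|] := pselect (forall w, A w -> w <= v).
  have Qmax : Q None !=set0 by exists v.
  exists (xget 0 (Q None)); first by exists None.
  by have [_] := xgetPex 0 Qmax; apply.
move=> /existsNP[w /not_implyP[Aw /negP]]; rewrite -ltNge => vw.
have [q] := rat_in_itvoo vw; rewrite in_itv /= => /andP[vq qw].
have Qq : Q (Some q) !=set0 by exists w; split=> //; exact: ltW.
exists (xget 0 (Q (Some q))); first by exists (Some q).
by have [_ /(lt_le_trans vq)/ltW] := xgetPex 0 Qq.
Qed.

Lemma countable_interval_cover (A : set R) :
  exists2 P : set (R * R), countable P /\ P `<=` A `*` A &
    A `<=` \bigcup_(p in P) `[p.1, p.2]%classic.
Proof.
have [U [Uc UA] Ucov] := countable_cofinal_subset A.
have [L [Lc LA] Lcov] := countable_cofinal_subset [set - v | v in A].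
exists ([set - c | c in L] `*` U); first split.
- exact: countableX (sub_countable (card_image_le _ _) Lc) Uc.
- move=> [_ b] [[c /LA[a Aa <-] /= <-] /UA Ab]; split=> //=.
  by rewrite opprK.
- move=> v Av; have [b Ub vb] := Ucov v Av.
  have [c Lc' vc] := Lcov (- v) (ex_intro2 _ _ v Av erefl).
  exists (- c, b); first by split=> //; exists c.
  by rewrite /= in_itv /= vb lerNl vc.
Qed.

End countable_interval_cover.

Lemma lindelof_joined_itv (X : topologicalType) (R : realType) (f : X -> R) (x y : X) :
  continuous f -> lindelof_joined x y ->
  exists2 Z, lindelof_subset Z & `[f x, f y]%classic `<=` f @` Z.
Proof.
move=> fC [Z [Zl Zconn Zx Zy]]; exists Z => // v.
have : is_interval (f @` Z).
  apply/connected_intervalP/connected_continuous_connected => //.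
  exact: continuous_subspaceT.
by move=> /(_ (f x) (f y) (imageP _ Zx) (imageP _ Zy) v); rewrite /= in_itv.
Qed.

Lemma lindelof_subset_range (X : topologicalType) (R : realType) (f : X -> R) :
  continuous f -> (forall x y : X, lindelof_joined x y) ->
  exists2 Z, lindelof_subset Z & f @` Z = range f.
Proof.
move=> fC joined.
have [P [Pc Pf] Pcov] := countable_interval_cover (range f).
have /choice[Z ZP] : forall p : R * R, exists Z : set X,
    P p -> lindelof_subset Z /\ `[p.1, p.2]%classic `<=` f @` Z.
  move=> p; have [/Pf[[x _ <-] [y _ <-]]|nPp] := pselect (P p); last by exists set0.
  by have [Z ? ?] := lindelof_joined_itv fC (joined x y); exists Z.
exists (\bigcup_(p in P) Z p).
  by apply: lindelof_bigcup => // p /ZP[].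
apply/seteqP; split=> [_ [x _ <-]|v /Pcov[p Pp /(proj2 (ZP p Pp))[x Zpx <-]]].
  by exists x.
by exists x => //; exists p.
Qed.

Theorem theorem5p1 (R : realType) (M : topologicalType) :
  manifold R M -> prop_L M R.
Proof.
move=> [_ [Mconn [n Meuc]]] f fC.
have joined : forall x y : M, lindelof_joined x y.
  apply: connected_locally_total Mconn _ _ (locally_euclidean_joined Meuc).
    exact: lindelof_joined_sym.
  exact: lindelof_joined_trans.
have [Z Zl fZ] := lindelof_subset_range fC joined.
by exists Z.
Qed.
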